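(* Let $V$ be a verifier with randomness complexity $r(n)=O(\log n)$ and query complexity $q(n)=O(1)$, let $x\in\{0,1\}^n$, and let $\pi^{\mathsf{start}}(x),\pi^{\mathsf{goal}}(x)\in\{0,1\}^{\mathrm{poly}(n)}$ be two proofs that $V(x)$ accepts with probability $1$. Then there always exists a reconfiguration sequence $(\pi^{(1)},\ldots,\pi^{(T)})$ from $\pi^{\mathsf{start}}(x)$ to $\pi^{\mathsf{goal}}(x)$ over $\{0,1\}^{\mathrm{poly}(n)}$ such that \[\Pr_{t\sim\{1,\ldots,T\},\,(I,D)\sim V(x)}\bigl[D(\pi^{(t)}|_I)=1\bigr] > 1-\frac{1}{2^{\Omega(n)}},\] where $t$ is uniform and independent of the random bits of $V$.
   Context: A verifier with randomness complexity $r$ and query complexity $q$ is a probabilistic polynomial-time algorithm $V$ that, on input $x$, tosses $r(|x|)$ random bits and generates from them a tuple of $q(|x|)$ positions $I$ and a circuit $D\colon\{0,1\}^{q}\to\{0,1\}$; $(I,D)\sim V(x)$ denotes this random pair, and $V$ accepts proof $\pi$ (for a given choice of randomness) when $D(\pi|_I)=1$, $\pi|_I$ being the restriction of $\pi$ to positions $I$. A reconfiguration sequence from $\pi^{\mathsf{start}}$ to $\pi^{\mathsf{goal}}$ over $\{0,1\}^m$ is a finite sequence of strings in $\{0,1\}^m$ starting at $\pi^{\mathsf{start}}$, ending at $\pi^{\mathsf{goal}}$, with consecutive strings differing in at most one bit. *)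

From mathcomp Require Import all_boot all_order all_algebra.
Set Implicit Arguments. Unset Strict Implicit. Unset Printing Implicit Defensive.
Import Order.TTheory GRing.Theory Num.Theory.
Local Open Scope ring_scope.

(* A (nonadaptive) verifier: on input x in {0,1}^n, with proof length plen n,
   it tosses rc n random bits and from them generates a tuple of qc n
   positions I (in 'I_(plen n)) and a decision predicate D on {0,1}^(qc n). *)
Record verifier := Verifier {
  rc : nat -> nat;
  qc : nat -> nat;
  plen : nat -> nat;
  vquery : forall n : nat, n.-tuple bool -> (rc n).-tuple bool ->
             ((qc n).-tuple 'I_(plen n) * {ffun (qc n).-tuple bool -> bool})%type
}.

Definition restrict (m q : nat) (pi : m.-tuple bool) (I : q.-tuple 'I_m)
  : q.-tuple bool := [tuple of map (fun i => tnth pi i) I].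

Definition accepts (V : verifier) (n : nat) (x : n.-tuple bool)
  (pi : (plen V n).-tuple bool) (rho : (rc V n).-tuple bool) : bool :=
  let p := @vquery V n x rho in p.2 (restrict pi p.1).

Definition acc_prob (V : verifier) (n : nat) (x : n.-tuple bool)
  (pi : (plen V n).-tuple bool) : rat :=
  (#|[set rho : (rc V n).-tuple bool | @accepts V n x pi rho]|)%:R
  / (2 ^ rc V n)%:R.

Definition hdist (m : nat) (a b : m.-tuple bool) : nat :=
  #|[set i : 'I_m | tnth a i != tnth b i]|.

Definition reconf_seq (m : nat) (a b : m.-tuple bool) (s : seq (m.-tuple bool))
  : bool :=
  if s is h :: t then
    [&& h == a, last h t == b & path (fun u v => hdist u v <= 1)%N h t]
  else false.

Definition avg_acc (V : verifier) (n : nat) (x : n.-tuple bool)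
  (s : seq ((plen V n).-tuple bool)) : rat :=
  (\sum_(t < size s) @acc_prob V n x (nth (nth [tuple of nseq _ false] s 0) s t))
  / (size s)%:R.

Arguments accepts V {n} x pi rho.
Arguments acc_prob V {n} x pi.
Arguments avg_acc V {n} x s.

(* Averaged over the whole sequence, acceptance is dominated by how long the
   sequence lingers at a proof that is always accepted.  So stay at
   pi_start for 2^n (m + 1) steps and only then walk to pi_goal by flipping
   the m bits of the proof one at a time: the m + 1 proofs of the walk are
   a fraction 1/(2^n + 1) of the sequence, which is below 2^-n.  This needs
   none of the bounds on randomness, queries or proof length. *)

From mathcomp Require Import all_boot all_order all_algebra.
From mathcomp Require Import ring lra.
Set Implicit Arguments. Unset Strict Implicit. Unset Printing Implicit Defensive.
Import Order.TTheory GRing.Theory Num.Theory.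
Local Open Scope ring_scope.

Section Reconfiguration.
Variable m : nat.
Implicit Types a b c : m.-tuple bool.

Lemma hdist_refl a : hdist a a = 0%N.
Proof. by apply/eqP; rewrite cards_eq0; apply/eqP/setP => i; rewrite !inE eqxx. Qed.

Lemma reconf_seq_consl a b s : reconf_seq a b s -> reconf_seq a b (a :: s).
Proof.
case: s => // h t /and3P[/eqP-> last_t path_t].
by rewrite /reconf_seq /= eqxx last_t path_t /= hdist_refl.
Qed.

Lemma reconf_seq_padl M a b s :
  reconf_seq a b s -> reconf_seq a b (nseq M a ++ s).
Proof. by move=> s_ab; elim: M => //= M; apply: reconf_seq_consl. Qed.

Lemma reconf_seq_rcons a b c s :
  reconf_seq a b s -> (hdist b c <= 1)%N -> reconf_seq a c (rcons s c).
Proof.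
case: s => // h t /and3P[h_a /eqP last_t path_t] bc.
by rewrite /reconf_seq /= h_a last_rcons eqxx rcons_path path_t last_t bc.
Qed.

Lemma reconf_seq_iota (f : nat -> m.-tuple bool) k :
  (forall i, hdist (f i) (f i.+1) <= 1)%N ->
  reconf_seq (f 0%N) (f k) [seq f i | i <- iota 0 k.+1].
Proof.
move=> f_step; elim: k => [|k IHk]; first by rewrite /reconf_seq /= !eqxx.
by rewrite -(addn1 k.+1) iotaD cats1 map_rcons; apply: reconf_seq_rcons IHk (f_step k).
Qed.

Definition hybrid a b (k : nat) : m.-tuple bool :=
  [tuple if (i < k)%N then tnth b i else tnth a i | i < m].

Lemma hybrid0 a b : hybrid a b 0 = a.
Proof. by apply: eq_from_tnth => i; rewrite tnth_mktuple. Qed.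

Lemma hybrid_full a b : hybrid a b m = b.
Proof. by apply: eq_from_tnth => i; rewrite tnth_mktuple ltn_ord. Qed.

Lemma hdist_hybridS a b k : (hdist (hybrid a b k) (hybrid a b k.+1) <= 1)%N.
Proof.
apply/card_le1_eqP => i j; rewrite !inE !tnth_mktuple.
have differ_at_k (l : 'I_m) :
    (if (l < k)%N then tnth b l else tnth a l) !=
    (if (l < k.+1)%N then tnth b l else tnth a l) -> val l = k.
  case: (ltngtP l k) => [l_lt|l_gt|] //; last by rewrite ltnS leqNgt l_gt eqxx.
  by rewrite ltnW ?eqxx.
by move=> /differ_at_k i_k /differ_at_k j_k; apply: val_inj; rewrite i_k j_k.
Qed.

Definition bitwise_walk a b : seq (m.-tuple bool) :=
  [seq hybrid a b k | k <- iota 0 m.+1].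

Lemma size_bitwise_walk a b : size (bitwise_walk a b) = m.+1.
Proof. by rewrite size_map size_iota. Qed.

Lemma reconf_seq_bitwise_walk a b : reconf_seq a b (bitwise_walk a b).
Proof.
rewrite -{1}(hybrid_full a b) -{1}(hybrid0 a b).
exact: reconf_seq_iota (hdist_hybridS a b).
Qed.

End Reconfiguration.

Section Mean.
Variables (R : numFieldType) (T : Type).
Implicit Types (f : T -> R) (s : seq T).

Definition mean f s : R := (\sum_(p <- s) f p) / (size s)%:R.

Lemma mean_padl_ge f a s K :
  (forall p, 0 <= f p) -> f a = 1 -> (0 < size s)%N ->
  K%:R / K.+1%:R <= mean f (nseq (K * size s) a ++ s).
Proof.
move=> f_ge0 fa1 s_gt0.
have size_pad : size (nseq (K * size s) a ++ s) = (K.+1 * size s)%N.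
  by rewrite size_cat size_nseq mulSn addnC.
have sum_pad : (K * size s)%:R <= \sum_(p <- nseq (K * size s) a ++ s) f p.
  by rewrite big_cat big_nseq fa1 iter_addr addr0 lerDl sumr_ge0.
rewrite /mean size_pad; apply: le_trans (ler_wpM2r _ sum_pad); last by rewrite invr_ge0.
by rewrite !natrM invfM mulrACA divff ?mulr1 // lt0r_neq0 ?ltr0n.
Qed.

End Mean.

Lemma avg_acc_mean V n (x : n.-tuple bool) s :
  avg_acc V x s = mean (acc_prob V x) s.
Proof. by rewrite /avg_acc /mean (big_nth (nth [tuple of nseq _ false] s 0)) big_mkord. Qed.

Lemma acc_prob_ge0 V n (x : n.-tuple bool) pi : 0 <= acc_prob V x pi.
Proof. by rewrite /acc_prob divr_ge0 ?ler0n. Qed.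

Lemma one_sub_inv_lt_ratio (R : realFieldType) (k : R) :
  0 < k -> 1 - 1 / k < k / (k + 1).
Proof.
move=> k_gt0; have k1_gt0 : 0 < k + 1 by lra.
have -> : k / (k + 1) = 1 - 1 / (k + 1) by field; rewrite lt0r_neq0.
by rewrite ltrD2l ltrN2 !div1r ltf_pV2 ?ltrDl.
Qed.

Theorem mainTheorem5 (V : verifier) :
  (* r(n) = O(log n) *)
  (exists C N0 : nat, forall n : nat, (N0 <= n)%N ->
      (rc V n <= C * trunc_log 2 n)%N) ->
  (* q(n) = O(1) *)
  (exists Q : nat, forall n : nat, (qc V n <= Q)%N) ->
  (* proof length poly(n) *)
  (exists k : nat, forall n : nat, (plen V n <= n ^ k + k)%N) ->
  (* acceptance probability > 1 - 2^{-Omega(n)} *)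
  exists e : nat -> nat,
    (exists (c : rat) (N1 : nat), 0 < c /\
       forall n : nat, (N1 <= n)%N -> c * n%:R <= (e n)%:R) /\
    forall (n : nat) (x : n.-tuple bool)
           (pi_start pi_goal : (plen V n).-tuple bool),
      acc_prob V x pi_start = 1 ->
      acc_prob V x pi_goal = 1 ->
      exists s : seq ((plen V n).-tuple bool),
        reconf_seq pi_start pi_goal s /\
        avg_acc V x s > 1 - 1 / (2 ^ e n)%:R.
Proof.
move=> _ _ _; exists id; split; first by exists 1, 0%N; split => // n _; rewrite mul1r.
move=> n x pi_start pi_goal start_acc _.
set walk := bitwise_walk pi_start pi_goal.
exists (nseq (2 ^ n * size walk) pi_start ++ walk); split.
  exact/reconf_seq_padl/reconf_seq_bitwise_walk.
rewrite avg_acc_mean; apply: lt_le_trans (mean_padl_ge _ _ _ _).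
- by rewrite -[(2 ^ n).+1]addn1 natrD one_sub_inv_lt_ratio ?ltr0n ?expn_gt0.
- exact: acc_prob_ge0.
- exact: start_acc.
- by rewrite size_bitwise_walk.
Qed.
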